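(* Let $\nabla$ be the unique torsionless connection on $\mathcal E$ that is unitary with respect to the canonical metric $g$, and write $\nabla(e_i)=\sum_{j,k=1}^3e_j\otimes e_k\Gamma^i_{jk}$. Then $\Gamma^1_{32}=\Gamma^2_{13}=\Gamma^3_{21}=\tfrac12$, $\Gamma^1_{23}=\Gamma^2_{31}=\Gamma^3_{12}=-\tfrac12$, and all other $\Gamma^i_{jk}$ vanish; that is, $$\nabla(e_1)=\tfrac12(e_3\otimes e_2-e_2\otimes e_3),\ \nabla(e_2)=\tfrac12(e_1\otimes e_3-e_3\otimes e_1),\ \nabla(e_3)=\tfrac12(e_2\otimes e_1-e_1\otimes e_2).$$
   Context: Let $\mathcal O_3$ be the Cuntz algebra with three generators ($S_i^*S_i=1$, $\sum_jS_jS_j^*=1$), $\mathcal A$ the unital $*$-subalgebra generated by $S_1,S_2,S_3$. Let $\partial_1,\partial_2,\partial_3$ be the $*$-derivations of $\mathcal A$ with $\partial_1S_1=0,\ \partial_1S_2=-S_3,\ \partial_1S_3=S_2$; $\partial_2S_1=-S_3,\ \partial_2S_2=0,\ \partial_2S_3=S_1$; $\partial_3S_1=S_2,\ \partial_3S_2=-S_1,\ \partial_3S_3=0$. Let $\mathcal D=\sum_i\partial_i\otimes\sigma_i$ on $L^2(\mathcal O_3,\tau)\otimes\mathbb C^N$ ($\tau$ the KMS state, $\mathcal A$ acting by $a\otimes I$), with $\sigma_i$ mutually anticommuting involutions such that $\{\sigma_i\}$ and $\{I,\sigma_1\sigma_2,\sigma_1\sigma_3,\sigma_2\sigma_3\}$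 are linearly independent. The Connes calculus: $\Omega^k_{\mathcal D}(\mathcal A)=\Pi(\Omega^k(\mathcal A))/\Pi(\delta J_0^{k-1})$ with $\Pi(a_0\delta a_1\cdots\delta a_k)=a_0[\mathcal D,a_1]\cdots[\mathcal D,a_k]$, $J_0^k=\ker\Pi\cap\Omega^k(\mathcal A)$, differential $d$ induced by $\delta$, product $m$ induced by multiplication. $\mathcal E=\Omega^1_{\mathcal D}(\mathcal A)$ is free with basis $e_i=1\otimes\sigma_i$, $ae_i=e_ia$; $m(e_i\otimes e_j)$ = class of $1\otimes\sigma_i\sigma_j$. A connection is a $\mathbb C$-linear $\nabla:\mathcal E\to\mathcal E\otimes_{\mathcal A}\mathcal E$ with $\nabla(\omega a)=\nabla(\omega)a+\omega\otimes da$; torsionless means $m\circ\nabla+d=0$. The canonical metric is the right $\mathcal A$-linear $g$ with $g(e_i\otimes e_ja)=\delta_{ij}a$. Unitarity with respect to $g$ means $\Pi_g(\nabla)=dg$, where $dg,\Pi_g(\nabla):\mathcal E\otimes_{\mathcal A}\mathcal E\to\mathcal E$ are right $\mathcal A$-linear with $dg(e_i\otimes e_j)=d(g(e_i\otimes e_j))$ and $\Pi_g(\nabla)(e_i\otimes e_j)=(g\otimes\mathrm{id})\sigma_{23}(\nabla(e_i)\otimes e_j+\nabla(e_j)\otimes e_i)$, where $\sigma_{23}(e_a\otimes e_b\otimes e_cx)=e_a\otimes e_c\otimes e_bx$ and $(g\otimes\mathrm{id})(e_a\otimes e_b\otimes e_cx)=g(e_a\otimes e_b)e_cx$. (Such a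 $\nabla$ exists and is unique.) *)

From HB Require Import structures.
From mathcomp Require Import all_boot all_order all_algebra.
Set Implicit Arguments. Unset Strict Implicit. Unset Printing Implicit Defensive.
Import GRing.Theory Num.Theory.
Local Open Scope ring_scope.

Definition I1 : 'I_3 := @Ordinal 3 0 isT.
Definition I2 : 'I_3 := @Ordinal 3 1 isT.
Definition I3 : 'I_3 := @Ordinal 3 2 isT.

Section CuntzCalculus.
Variables (C : numClosedFieldType) (A : algType C).

Definition is_star (st : A -> A) : Prop :=
  [/\ involutive st,
      (forall x y, st (x + y) = st x + st y),
      (forall x y, st (x * y) = st y * st x) &
      (forall (c : C) x, st (c *: x) = (Num.conj c) *: st x)].

Definition cuntz (st : A -> A) (S : 'I_3 -> A) : Prop :=
  (forall i j, st (S i) * S j = (i == j)%:R) /\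
  \sum_(j < 3) S j * st (S j) = 1.

Definition generates (st : A -> A) (S : 'I_3 -> A) : Prop :=
  forall P : A -> Prop,
    P 1 ->
    (forall x y, P x -> P y -> P (x + y)) ->
    (forall (c : C) x, P x -> P (c *: x)) ->
    (forall x y, P x -> P y -> P (x * y)) ->
    (forall x, P x -> P (st x)) ->
    (forall i, P (S i)) ->
    forall a, P a.

Definition is_star_derivation (st : A -> A) (D : A -> A) : Prop :=
  [/\ (forall (c : C) x y, D (c *: x + y) = c *: D x + D y),
      (forall x y, D (x * y) = D x * y + x * D y) &
      (forall x, D (st x) = st (D x))].

Definition derivation_values (dd : 'I_3 -> A -> A) (S : 'I_3 -> A) : Prop :=
  [/\ [/\ dd I1 (S I1) = 0, dd I1 (S I2) = - S I3 & dd I1 (S I3) = S I2],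
      [/\ dd I2 (S I1) = - S I3, dd I2 (S I2) = 0 & dd I2 (S I3) = S I1] &
      [/\ dd I3 (S I1) = S I2, dd I3 (S I2) = - S I1 & dd I3 (S I3) = 0]].

Variable N : nat.

Definition clifford (sig : 'I_3 -> 'M[C]_N) : Prop :=
  [/\ (forall i, sig i *m sig i = 1%:M),
      (forall i j, i != j -> sig i *m sig j = - (sig j *m sig i)),
      (forall c : 'I_3 -> C, \sum_i c i *: sig i = 0 -> forall i, c i = 0) &
      forall (c0 c12 c13 c23 : C),
        c0 *: 1%:M + c12 *: (sig I1 *m sig I2) + c13 *: (sig I1 *m sig I3)
          + c23 *: (sig I2 *m sig I3) = 0 ->
        [/\ c0 = 0, c12 = 0, c13 = 0 & c23 = 0]].

(* operators on L^2 (x) C^N are modelled by A (x) M_N(C) = M_N(A);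
   a in A acts as a%:M, and sigma as the lifted scalar matrix *)
Definition liftm (M : 'M[C]_N) : 'M[A]_N := map_mx (fun c => c%:A) M.

Variables (dd : 'I_3 -> A -> A) (sig : 'I_3 -> 'M[C]_N).

(* [D, a] = sum_i partial_i(a) (x) sigma_i *)
Definition Dcomm (a : A) : 'M[A]_N := \sum_(i < 3) (dd i a)%:M *m liftm (sig i).

(* universal 1-forms  sum_t a0_t delta a1_t  are given by lists of pairs *)
Definition Pi1 (l : seq (A * A)) : 'M[A]_N :=
  \sum_(t <- l) (t.1)%:M *m Dcomm t.2.

(* Pi (delta omega) for omega = sum_t a0_t delta a1_t *)
Definition Pi_delta1 (l : seq (A * A)) : 'M[A]_N :=
  \sum_(t <- l) Dcomm t.1 *m Dcomm t.2.

Definition junk2 (X : 'M[A]_N) : Prop :=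
  exists l : seq (A * A), Pi1 l = 0 /\ X = Pi_delta1 l.

(* an element sum_i e_i w_i of E is its row of coefficients w : 'rV[A]_3;
   an element sum_{j,k} e_j (x) e_k X_jk of E (x)_A E is X : 'M[A]_3 *)

Definition ebasis (i : 'I_3) : 'rV[A]_3 := \row_k (i == k)%:R.

(* coefficients of the element Pi(sum_t a0_t delta a1_t) of E *)
Definition E_of (l : seq (A * A)) : 'rV[A]_3 :=
  \row_k \sum_(t <- l) t.1 * dd k t.2.

Definition ract (w : 'rV[A]_3) (a : A) : 'rV[A]_3 := \row_k (w 0 k * a).
Definition ract2 (X : 'M[A]_3) (a : A) : 'M[A]_3 := \matrix_(j, k) (X j k * a).
Definition dA (a : A) : 'rV[A]_3 := \row_k dd k a.
Definition tens (w v : 'rV[A]_3) : 'M[A]_3 := \matrix_(j, k) (w 0 j * v 0 k).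

(* multiplication m : E (x) E -> Omega^2_D, representative in M_N(A) *)
Definition mmap (X : 'M[A]_3) : 'M[A]_N :=
  \sum_(j < 3) \sum_(k < 3) (X j k)%:M *m liftm (sig j *m sig k).

Definition connection (nab : 'rV[A]_3 -> 'M[A]_3) : Prop :=
  (forall (c : C) x y, nab ((c%:A) *: x + y) = (c%:A) *: nab x + nab y) /\
  (forall w a, nab (ract w a) = ract2 (nab w) a + tens w (dA a)).

(* m o nab + d = 0 : for every omega = Pi(u) in E,
   m(nab omega) + d omega is zero in Omega^2_D *)
Definition torsionless (nab : 'rV[A]_3 -> 'M[A]_3) : Prop :=
  forall l : seq (A * A), junk2 (mmap (nab (E_of l)) + Pi_delta1 l).

(* E (x) E (x) E, coefficient T a b c of e_a (x) e_b (x) e_c *)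
Definition tens3 (X : 'M[A]_3) (v : 'rV[A]_3) : 'I_3 -> 'M[A]_3 :=
  fun a => \matrix_(b, c) (X a b * v 0 c).
Definition sigma23 (T : 'I_3 -> 'M[A]_3) : 'I_3 -> 'M[A]_3 :=
  fun a => \matrix_(b, c) T a c b.
Definition g_id (T : 'I_3 -> 'M[A]_3) : 'rV[A]_3 :=
  \row_c \sum_(a < 3) T a a c.
Definition addT (T U : 'I_3 -> 'M[A]_3) : 'I_3 -> 'M[A]_3 := fun a => T a + U a.

Definition gmetric (i j : 'I_3) : A := (i == j)%:R.

Definition Pi_g (nab : 'rV[A]_3 -> 'M[A]_3) (i j : 'I_3) : 'rV[A]_3 :=
  g_id (sigma23 (addT (tens3 (nab (ebasis i)) (ebasis j))
                      (tens3 (nab (ebasis j)) (ebasis i)))).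

Definition dg (i j : 'I_3) : 'rV[A]_3 := dA (gmetric i j).

(* both sides are right A-linear maps on the free module E (x) E,
   so equality is tested on the basis e_i (x) e_j *)
Definition unitary (nab : 'rV[A]_3 -> 'M[A]_3) : Prop :=
  forall i j, Pi_g nab i j = dg i j.

Definition half_sc : A := (2%:R^-1 : C)%:A.

End CuntzCalculus.

(* Unitarity for the canonical metric, whose values are constants, makes Gamma^i_jk
   antisymmetric in (i, j).  Torsion-freeness fixes the antisymmetric part of Gamma^i
   in (j, k): writing e_i = a db, the 2-form m(nab e_i) + da db must be junk.  Junk
   2-forms are images under m of symmetric coefficient matrices, because every bracket
   [d_j, d_k] is again one of the d_m; and m(Z) = 0 forces Z to be symmetric, because
   1, s1 s2, s1 s3, s2 s3 are independent.  A tensor antisymmetric in its first two and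
   symmetric in its last two indices vanishes (alternating the two symmetries three
   times gives T = -T), so two solutions coincide, and the proposed symbols are one. *)

From HB Require Import structures.
From mathcomp Require Import all_boot all_order all_algebra.
Set Implicit Arguments. Unset Strict Implicit. Unset Printing Implicit Defensive.
Import GRing.Theory Num.Theory.
Local Open Scope ring_scope.

Lemma ord3P (i : 'I_3) : [\/ i = I1, i = I2 | i = I3].
Proof.
by case: i => [[|[|[|//]]] ?]; [constructor 1 | constructor 2 | constructor 3]; apply: val_inj.
Qed.

Lemma big_ord3 (V : nmodType) (F : 'I_3 -> V) : \sum_i F i = F I1 + F I2 + F I3.
Proof. by rewrite !big_ord_recl big_ord0 addr0 addrA; congr (F _ + F _ + F _); apply: val_inj. Qed.

Lemma antisym_sym_tensor_eq0 (R : fieldType) (V : lmodType R) (I : Type)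
    (T : I -> I -> I -> V) :
  2 != 0 :> R -> (forall i j k, T i j k = - T j i k) ->
  (forall i j k, T i j k = T i k j) -> forall i j k, T i j k = 0.
Proof.
move=> two_neq0 asymT symT i j k.
have : T i j k = - T i j k.
  by rewrite {1}asymT symT asymT symT asymT symT !opprK.
move/eqP; rewrite -addr_eq0 -mulr2n -scaler_nat scaler_eq0 (negbTE two_neq0).
by move/eqP.
Qed.

Section LiftedFunctional.
Variables (K : fieldType) (A : algType K) (N : nat).

(* The A-linear extension to M_N(A) = A (x) M_N(K) of a functional on M_N(K); it turns
   K-linear independence of matrices into the vanishing of coefficients in A. *)

Definition lift_functional (lam : 'M[K]_N -> K) (X : 'M[A]_N) : A :=
  \sum_p \sum_q X p q * (lam (delta_mx p q))%:A.

Fact lift_functional_is_zmod_morphism lam : zmod_morphism (lift_functional lam).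
Proof.
move=> X Y; rewrite /lift_functional -sumrB; apply: eq_bigr => p _.
by rewrite -sumrB; apply: eq_bigr => q _; rewrite !mxE mulrBl.
Qed.

HB.instance Definition _ lam :=
  GRing.isZmodMorphism.Build 'M[A]_N A (lift_functional lam)
    (lift_functional_is_zmod_morphism lam).

Lemma lift_functional_tensor (lam : {scalar 'M[K]_N}) (x : A) (M : 'M[K]_N) :
  lift_functional lam (x%:M *m map_mx (in_alg A) M) = x * (lam M)%:A.
Proof.
rewrite {2}(matrix_sum_delta M) linear_sum /= scaler_suml mulr_sumr.
apply: eq_bigr => p _; rewrite linear_sum /= scaler_suml mulr_sumr.
apply: eq_bigr => q _; rewrite linearZ /= mul_scalar_mx !mxE.
by rewrite -mulrA mulr_algl scalerA.
Qed.

Lemma lift_functional_coord n (X : n.-tuple 'M[K]_N) (x : 'I_n -> A) r :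
  free X -> lift_functional (coord X r) (\sum_s (x s)%:M *m map_mx (in_alg A) X`_s) = x r.
Proof.
move=> freeX; rewrite raddf_sum (bigD1 r) //= big1 => [|s neq_sr].
  by rewrite lift_functional_tensor /= coord_free // eqxx scale1r mulr1 addr0.
by rewrite lift_functional_tensor /= coord_free // (negbTE neq_sr) scale0r mulr0.
Qed.

Lemma in_alg_mx_comm (M : 'M[K]_N) (x : A) :
  map_mx (in_alg A) M *m x%:M = x%:M *m map_mx (in_alg A) M.
Proof.
apply/matrixP => i j; rewrite mul_scalar_mx [RHS]mxE [in RHS]mxE.
rewrite mxE (bigD1 j) //= big1 => [|k /negbTE nkj]; rewrite !mxE ?eqxx ?nkj.
  by rewrite mulr1n addr0 mulr_algl mulr_algr.
by rewrite mulr0n mulr0.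
Qed.

End LiftedFunctional.

Section StarDerivations.
Variables (C : numClosedFieldType) (A : algType C) (st : A -> A).
Hypothesis st_star : is_star st.

Fact star_is_zmod_morphism : zmod_morphism st.
Proof.
case: st_star => _ stD _ _.
have st0 : st 0 = 0 by apply: (addIr (st 0)); rewrite -stD !add0r.
have stN x : st (- x) = - st x by apply: (addIr (st x)); rewrite -stD !addNr.
by move=> x y; rewrite stD stN.
Qed.

HB.instance Definition _ := GRing.isZmodMorphism.Build A A st star_is_zmod_morphism.

Lemma star_derivation1 D : is_star_derivation st D -> D 1 = 0.
Proof.
case=> _ DM _; have := DM 1 1.
by rewrite !mulr1 mul1r -[LHS]addr0 => /addrI.
Qed.

Section TwoStarDerivations.
Variables D1 D2 : A -> A.
Hypotheses (D1_der : is_star_derivation st D1) (D2_der : is_star_derivation st D2).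

Let D1_linear : linear D1. Proof. by case: D1_der. Qed.
Let D2_linear : linear D2. Proof. by case: D2_der. Qed.
HB.instance Definition _ := GRing.isLinear.Build C A A *:%R D1 D1_linear.
HB.instance Definition _ := GRing.isLinear.Build C A A *:%R D2 D2_linear.

Definition der_bracket (a : A) : A := D1 (D2 a) - D2 (D1 a).

Lemma der_bracket_star_derivation : is_star_derivation st der_bracket.
Proof.
case: D1_der => _ D1M D1J; case: D2_der => _ D2M D2J; split.
- by move=> c x y; rewrite /der_bracket !linearP /= scalerBr scalerN addrACA.
- move=> x y; rewrite /der_bracket D1M D2M !linearD /= D1M D2M D1M D2M mulrBl mulrBr.
  set b := D2 x * D1 y; set c := D1 x * D2 y.
  rewrite -opprD [c + _]addrC [_ * y + c]addrC [_ + b + _]addrACA [c + _ + _]addrACA.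
  by rewrite [c + b]addrC addrKA opprD addrACA.
- by move=> x; rewrite /der_bracket D1J D2J D1J D2J raddfB.
Qed.

Lemma star_derivation_eq_gen (S : 'I_3 -> A) :
  generates st S -> (forall i, D1 (S i) = D2 (S i)) -> D1 =1 D2.
Proof.
move=> S_gen D12S; case: D1_der => _ D1M D1J; case: D2_der => _ D2M D2J.
apply: S_gen => //.
- by rewrite (star_derivation1 D1_der) (star_derivation1 D2_der).
- by move=> x y D12x D12y; rewrite !linearD /= D12x D12y.
- by move=> c x D12x; rewrite !linearZ /= D12x.
- by move=> x y D12x D12y; rewrite D1M D2M D12x D12y.
- by move=> x D12x; rewrite D1J D2J D12x.
Qed.

End TwoStarDerivations.

End StarDerivations.

Section LeviCivita.
Variables (C : numClosedFieldType) (A : algType C) (st : A -> A) (S : 'I_3 -> A)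
  (dd : 'I_3 -> A -> A) (N : nat) (sig : 'I_3 -> 'M[C]_N).
Hypotheses (st_star : is_star st) (S_cuntz : cuntz st S) (S_gen : generates st S).
Hypotheses (dd_der : forall i, is_star_derivation st (dd i)) (dd_S : derivation_values dd S).
Hypothesis sig_clifford : clifford sig.

HB.instance Definition _ := GRing.isZmodMorphism.Build A A st (star_is_zmod_morphism st_star).

Let dd_linear i : linear (dd i). Proof. by case: (dd_der i). Qed.
HB.instance Definition _ i := GRing.isLinear.Build C A A *:%R (dd i) (dd_linear i).

(* Rewriting with raddfN itself would leave the folded instance in place of dd i. *)
Lemma ddN i x : dd i (- x) = - dd i x.
Proof. exact: raddfN. Qed.

Lemma dd0 i : dd i 0 = 0.
Proof. exact: raddf0. Qed.

Lemma star_N x : st (- x) = - st x.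
Proof. exact: raddfN. Qed.

Lemma ddM i x y : dd i (x * y) = dd i x * y + x * dd i y.
Proof. by case: (dd_der i). Qed.

Lemma dd_star i x : dd i (st x) = st (dd i x).
Proof. by case: (dd_der i). Qed.

Lemma star_S_mul i j : st (S i) * S j = (i == j)%:R.
Proof. by case: S_cuntz. Qed.

Lemma dd_SE :
  (dd I1 (S I1) = 0) * (dd I1 (S I2) = - S I3) * (dd I1 (S I3) = S I2) *
  (dd I2 (S I1) = - S I3) * (dd I2 (S I2) = 0) * (dd I2 (S I3) = S I1) *
  (dd I3 (S I1) = S I2) * (dd I3 (S I2) = - S I1) * (dd I3 (S I3) = 0).
Proof. by case: dd_S => [[-> -> ->] [-> -> ->] [-> -> ->]]. Qed.

Lemma dd_bracket_cyclic :
  [/\ der_bracket (dd I2) (dd I1) =1 dd I3, der_bracket (dd I3) (dd I2) =1 dd I1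
     & der_bracket (dd I1) (dd I3) =1 dd I2].
Proof.
have on_gen j k m : (forall i, der_bracket (dd j) (dd k) (S i) = dd m (S i)) ->
    der_bracket (dd j) (dd k) =1 dd m.
  exact: (star_derivation_eq_gen
    (der_bracket_star_derivation st_star (dd_der j) (dd_der k)) (dd_der m) S_gen).
by split; apply: on_gen => i; case: (ord3P i) => ->;
  rewrite /der_bracket !(dd_SE, ddN, dd0) ?(subrr, opprK, subr0, sub0r, add0r, oppr0).
Qed.

Lemma junk_coef_sym (l : seq (A * A)) :
  (forall r, \sum_(t <- l) t.1 * dd r t.2 = 0) ->
  forall j k, \sum_(t <- l) dd j t.1 * dd k t.2 = \sum_(t <- l) dd k t.1 * dd j t.2.
Proof.
move=> l0.
have expand j k : \sum_(t <- l) dd j t.1 * dd k t.2 = - \sum_(t <- l) t.1 * dd j (dd k t.2).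
  apply/eqP; rewrite -addr_eq0 -big_split /=.
  under eq_bigr do rewrite -ddM.
  by rewrite -raddf_sum /= l0 dd0.
have from_bracket j k m : (forall a, dd k (dd j a) - dd j (dd k a) = dd m a) ->
    \sum_(t <- l) dd j t.1 * dd k t.2 = \sum_(t <- l) dd k t.1 * dd j t.2.
  move=> br; apply/eqP; rewrite -subr_eq0 !expand opprK addrC -sumrB.
  by under eq_bigr do rewrite -mulrBr br; rewrite l0.
have [b213 b321 b132] := dd_bracket_cyclic.
move=> j k; case: (ord3P j) => ->; case: (ord3P k) => ->;
  first [ done | apply: from_bracket; eassumption
        | symmetry; apply: from_bracket; eassumption ].
Qed.

Fact mmap_is_zmod_morphism : zmod_morphism (mmap (A:=A) sig).
Proof.
move=> X Y; rewrite /mmap -sumrB; apply: eq_bigr => j _.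
by rewrite -sumrB; apply: eq_bigr => k _; rewrite !mxE raddfB mulmxBl.
Qed.

HB.instance Definition _ :=
  GRing.isZmodMorphism.Build 'M[A]_3 'M[A]_N (mmap (A:=A) sig) mmap_is_zmod_morphism.

Lemma Dcomm_mulmx a b :
  Dcomm dd sig a *m Dcomm dd sig b = mmap sig (tens (dA dd a) (dA dd b)).
Proof.
rewrite /Dcomm /mmap mulmx_suml; apply: eq_bigr => j _.
rewrite mulmx_sumr; apply: eq_bigr => k _.
rewrite !mxE /liftm (map_mxM (in_alg A)) scalar_mxM !mulmxA.
by rewrite -(mulmxA _ (map_mx _ (sig j))) in_alg_mx_comm !mulmxA.
Qed.

Lemma Pi_delta1_mmap l :
  Pi_delta1 dd sig l = mmap sig (\sum_(t <- l) tens (dA dd t.1) (dA dd t.2)).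
Proof. by rewrite raddf_sum; apply: eq_bigr => t _; rewrite Dcomm_mulmx. Qed.

Lemma free_sig : free [tuple sig i | i < 3].
Proof.
apply/freeP => c sum_c0; case: sig_clifford => _ _ sig_free _; apply: sig_free.
by rewrite -[RHS]sum_c0; apply: eq_bigr => i _; rewrite nth_mktuple.
Qed.

Lemma Pi1_eq0_coef l : Pi1 dd sig l = 0 -> forall r, \sum_(t <- l) t.1 * dd r t.2 = 0.
Proof.
pose x i := \sum_(t <- l) t.1 * dd i t.2.
have Pi1E : Pi1 dd sig l =
    \sum_i (x i)%:M *m map_mx (in_alg A) [tuple sig i | i < 3]`_i.
  rewrite /Pi1 /Dcomm; under eq_bigr do rewrite mulmx_sumr; rewrite exchange_big /=.
  apply: eq_bigr => i _; rewrite nth_mktuple raddf_sum mulmx_suml.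
  by apply: eq_bigr => t _; rewrite /= scalar_mxM mulmxA.
move=> Pi1_0 r; have := lift_functional_coord x r free_sig.
by rewrite -Pi1E Pi1_0 raddf0.
Qed.

Lemma junk2_sym X : junk2 dd sig X -> exists2 Y : 'M[A]_3, Y^T = Y & X = mmap sig Y.
Proof.
case=> l [Pi1_0 ->]; exists (\sum_(t <- l) tens (dA dd t.1) (dA dd t.2)).
  apply/matrixP => j k; rewrite !mxE !summxE.
  under eq_bigr do rewrite !mxE.
  under [RHS]eq_bigr do rewrite !mxE.
  exact: junk_coef_sym (Pi1_eq0_coef Pi1_0) k j.
exact: Pi_delta1_mmap.
Qed.

Definition clifford_basis : 4.-tuple 'M[C]_N :=
  [tuple 1%:M; sig I1 *m sig I2; sig I1 *m sig I3; sig I2 *m sig I3].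

Lemma free_clifford_basis : free clifford_basis.
Proof.
apply/freeP => c; rewrite !big_ord_recl big_ord0 addr0 /= !addrA.
case: sig_clifford => _ _ _ basis_free /basis_free [c0 c1 c2 c3].
by case=> [[|[|[|[|//]]]] ?]; [rewrite -c0 | rewrite -c1 | rewrite -c2 | rewrite -c3];
  congr c; apply: val_inj.
Qed.

Lemma mmap_eq0_sym (Z : 'M[A]_3) : mmap sig Z = 0 -> Z^T = Z.
Proof.
(* The coordinates of mmap Z along s1 s2, s1 s3, s2 s3 are Z12 - Z21, Z13 - Z31, Z23 - Z32. *)
move=> Z0.
have coef r : \sum_j \sum_k Z j k * (coord clifford_basis r (sig j *m sig k))%:A = 0.
  rewrite -[RHS](raddf0 (lift_functional (coord clifford_basis r))) -Z0 /mmap raddf_sum.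
  apply: eq_bigr => j _.
  by rewrite raddf_sum; apply: eq_bigr => k _; rewrite /= lift_functional_tensor.
have coord_basis (s r : 'I_4) : coord clifford_basis r clifford_basis`_s = (s == r)%:R.
  exact: coord_free free_clifford_basis.
have sq i : sig i *m sig i = 1%:M by case: sig_clifford.
have anti i j : i != j -> sig i *m sig j = - (sig j *m sig i).
  by case: sig_clifford => _ anti _ _; apply: anti.
have coordN r X : coord clifford_basis r (- X) = - coord clifford_basis r X.
  exact: linearN.
have c0 r : coord clifford_basis r 1%:M = (ord0 == r)%:R := coord_basis ord0 r.
have c12 r : coord clifford_basis r (sig I1 *m sig I2) = (@Ordinal 4 1 isT == r)%:R :=
  coord_basis (@Ordinal 4 1 isT) r.
have c13 r : coord clifford_basis r (sig I1 *m sig I3) = (@Ordinal 4 2 isT == r)%:R :=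
  coord_basis (@Ordinal 4 2 isT) r.
have c23 r : coord clifford_basis r (sig I2 *m sig I3) = (@Ordinal 4 3 isT == r)%:R :=
  coord_basis (@Ordinal 4 3 isT) r.
move: (coef (@Ordinal 4 1 isT)) (coef (@Ordinal 4 2 isT)) (coef (@Ordinal 4 3 isT)).
rewrite !big_ord3 !sq (anti I2 I1) // (anti I3 I1) // (anti I3 I2) // !coordN /=.
rewrite !c0 !c12 !c13 !c23 /= !(oppr0, scale0r, scale1r, scaleN1r, mulr0, mulr1, mulrN1).
rewrite !(add0r, addr0) => /subr0_eq z12 /subr0_eq z13 /subr0_eq z23.
apply/matrixP => j k; rewrite mxE.
by case: (ord3P j) => ->; case: (ord3P k) => ->; rewrite ?z12 ?z13 ?z23.
Qed.

Lemma half_sc_double : half_sc A + half_sc A = 1.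
Proof.
rewrite /half_sc -scalerDl -mulr2n -(mulr_natr (2%:R^-1 : C) 2) mulVf ?scale1r //.
by rewrite pnatr_eq0.
Qed.

Definition christoffel0 (i : 'I_3) : 'M[A]_3 :=
  let: (j, k) := if i == I1 then (I2, I3) else if i == I2 then (I3, I1) else (I1, I2) in
  half_sc A *: (tens (ebasis A k) (ebasis A j) - tens (ebasis A j) (ebasis A k)).

Lemma christoffel0_antisym i j k : christoffel0 i j k = - christoffel0 j i k.
Proof.
case: (ord3P i) => ->; case: (ord3P j) => ->; case: (ord3P k) => ->;
  by rewrite /christoffel0 /= !mxE /=
       ?(mulr0, mul0r, mulr1, subr0, sub0r, addr0, add0r, mulrN, opprK, oppr0).
Qed.

Lemma christoffel0_torsion i : exists a b, E_of dd [:: (a, b)] = ebasis A i /\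
  (christoffel0 i + tens (dA dd a) (dA dd b))^T = christoffel0 i + tens (dA dd a) (dA dd b).
Proof.
(* By the Cuntz relations S_i^* S_j = delta_ij, each e_i is a single a db. *)
case: (ord3P i) => ->;
  [exists (- st (S I3)), (S I2) | exists (- st (S I3)), (S I1) | exists (st (S I2)), (S I1)].
all: split; [apply/rowP => k; rewrite !mxE big_seq1 /=; case: (ord3P k) => -> |
             apply/matrixP => j k; rewrite !mxE; case: (ord3P j) => ->; case: (ord3P k) => ->].
all: rewrite /christoffel0 /= ?mxE /= !(dd_SE, ddN, dd0, dd_star, star_N).
all: rewrite ?(mulrNN, mulNr, mulrN, star_S_mul, raddf0, opprK, oppr0, mulr0, mul0r, mulr1,
               subr0, sub0r, addr0, add0r) /=.
all: by rewrite -?half_sc_double ?(addKr, opprD, addrA, addNr, subrr, add0r, sub0r).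
Qed.

Variable nab : 'rV[A]_3 -> 'M[A]_3.
Hypotheses (nab_torsionless : torsionless dd sig nab) (nab_unitary : unitary dd nab).

Lemma unitary_antisym i j k : nab (ebasis A i) j k = - nab (ebasis A j) i k.
Proof.
have sum_delta (x : 'I_3 -> A) l : \sum_m x m * (l == m)%:R = x l.
  rewrite (bigD1 l) //= big1 => [|m /negbTE neq_ml]; first by rewrite eqxx mulr1 addr0.
  by rewrite eq_sym neq_ml mulr0.
have dd_nat (b : bool) : dd k b%:R = 0.
  by case: b; [exact: star_derivation1 (dd_der k) | exact: dd0].
have := nab_unitary i j; move/rowP/(_ k).
rewrite /Pi_g /dg /g_id /sigma23 /addT /tens3 /dA /gmetric !mxE.
under eq_bigr do rewrite !mxE.
rewrite big_split /= !sum_delta dd_nat => /eqP.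
by rewrite addr_eq0 => /eqP.
Qed.

Lemma torsion_sym i a b : E_of dd [:: (a, b)] = ebasis A i ->
  (nab (ebasis A i) + tens (dA dd a) (dA dd b))^T = nab (ebasis A i) + tens (dA dd a) (dA dd b).
Proof.
move=> Eab; have [Y Ysym junkY] := junk2_sym (nab_torsionless [:: (a, b)]).
rewrite Eab Pi_delta1_mmap big_seq1 /= in junkY.
have /mmap_eq0_sym : mmap sig (nab (ebasis A i) + tens (dA dd a) (dA dd b) - Y) = 0.
  by rewrite raddfB raddfD /= junkY subrr.
by rewrite linearB /= Ysym => /addIr.
Qed.

Lemma levi_civita_christoffel i : nab (ebasis A i) = christoffel0 i.
Proof.
pose D i j k := nab (ebasis A i) j k - christoffel0 i j k.
have D_antisym i' j k : D i' j k = - D j i' k.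
  by rewrite /D unitary_antisym christoffel0_antisym opprD.
have D_sym i' j k : D i' j k = D i' k j.
  have [a [b [Eab Gam0_sym]]] := christoffel0_torsion i'.
  set T := tens (dA dd a) (dA dd b).
  have : (nab (ebasis A i') - christoffel0 i')^T = nab (ebasis A i') - christoffel0 i'.
    have -> : nab (ebasis A i') - christoffel0 i' =
        (nab (ebasis A i') + T) - (christoffel0 i' + T).
      by rewrite opprD addrACA subrr addr0.
    by rewrite linearB /= torsion_sym // Gam0_sym.
  by move/matrixP/(_ k j); rewrite !mxE.
have two_neq0 : 2 != 0 :> C by rewrite pnatr_eq0.
apply/matrixP => j k; apply/eqP; rewrite -subr_eq0; apply/eqP.
exact: antisym_sym_tensor_eq0 two_neq0 D_antisym D_sym i j k.
Qed.

End LeviCivita.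

Theorem mainTheorem8 (C : numClosedFieldType) (A : algType C) (st : A -> A)
    (S : 'I_3 -> A) (dd : 'I_3 -> A -> A) (N : nat) (sig : 'I_3 -> 'M[C]_N) :
  is_star st -> cuntz st S -> generates st S ->
  (forall i, is_star_derivation st (dd i)) -> derivation_values dd S ->
  clifford sig ->
  forall nab : 'rV[A]_3 -> 'M[A]_3,
    connection dd nab -> torsionless dd sig nab -> unitary dd nab ->
    [/\ nab (ebasis A I1) =
          half_sc A *: (tens (ebasis A I3) (ebasis A I2) - tens (ebasis A I2) (ebasis A I3)),
        nab (ebasis A I2) =
          half_sc A *: (tens (ebasis A I1) (ebasis A I3) - tens (ebasis A I3) (ebasis A I1)) &
        nab (ebasis A I3) =
          half_sc A *: (tens (ebasis A I2) (ebasis A I1) - tens (ebasis A I1) (ebasis A I2))].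
Proof.
move=> st_star S_cuntz S_gen dd_der dd_S sig_clifford nab _ nab_torsionless nab_unitary.
have nabE := levi_civita_christoffel st_star S_cuntz S_gen dd_der dd_S sig_clifford
  nab_torsionless nab_unitary.
by split; apply: nabE.
Qed.
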